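(* Let $(B,\lfloor\cdot,\cdot\rfloor,\|\cdot\|)$ be an SSDB space, $q(b):=\tfrac12\lfloor b,b\rfloor$, let $f\colon B\to\,]{-}\infty,\infty]$ be a proper convex lower semicontinuous BC--function and $g\colon B\to\,]{-}\infty,\infty]$ a proper convex lower semicontinuous TBC--function. Then $\mathrm{dom}\,f-\mathrm{dom}\,g=B$ if and only if ${\cal P}_q(f)-{\cal N}_q(g)=B$.
   Context: An SSDB space is a triple $(B,\lfloor\cdot,\cdot\rfloor,\|\cdot\|)$ where $B$ is a nonzero real vector space, $\lfloor\cdot,\cdot\rfloor$ a symmetric bilinear form, $(B,\|\cdot\|)$ a Banach space, and there is a linear isometry $\iota$ of $B$ onto $B^*$ with $\langle b,\iota(c)\rangle=\lfloor b,c\rfloor$. $\mathrm{dom}\,f:=\{b\colon f(b)\in\mathbb{R}\}$, $f^@(c):=\sup_{b}[\lfloor b,c\rfloor-f(b)]$. A BC--function is a proper convex $f$ with $f^@(b)\ge f(b)\ge q(b)$ for all $b$; a TBC--function is a proper convex $g$ with $g^@(-b)\ge g(b)\ge -q(b)$ for all $b$. ${\cal P}_q(f):=\{b\colon f(b)=q(b)\}$, ${\cal N}_q(g):=\{b\colon g(b)=-q(b)\}$. *)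

From HB Require Import structures.
From mathcomp Require Import all_boot all_order all_algebra.
From mathcomp Require Import all_classical all_reals all_analysis.
Set Implicit Arguments. Unset Strict Implicit. Unset Printing Implicit Defensive.
Import Order.TTheory GRing.Theory Num.Theory.
Import numFieldNormedType.Exports.
Local Open Scope classical_set_scope.
Local Open Scope ring_scope.

Section SSDB.
Context {R : realType} {B : completeNormedModType R}.

Definition sym_bilinear (bf : B -> B -> R) : Prop :=
  (forall b c, bf b c = bf c b) /\
  (forall a b b' c, bf (a *: b + b') c = a * bf b c + bf b' c).

(* The map iota : c |-> bf(., c) is a linear isometry of B ONTO B^*:
   - isometry: ||c|| = sup_{||b|| <= 1} |bf b c| (operator norm of bf(.,c)),
     written out as "upper bound" + "approximated within any eps > 0";
   - onto: every continuous linear functional on B is of the form bf(., c).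
   (linearity of iota follows from bilinearity.) *)
Definition SSDB (bf : B -> B -> R) : Prop :=
  (exists b : B, b != 0) /\
  sym_bilinear bf /\
  (forall c : B,
      (forall b : B, `|b| <= 1 -> `|bf b c| <= `|c|) /\
      (forall e : R, 0 < e -> exists b : B, `|b| <= 1 /\ `|c| - e < `|bf b c|)) /\
  (forall phi : {linear B -> R^o}, continuous phi ->
      exists c : B, forall b, phi b = bf b c).

Definition qf (bf : B -> B -> R) (b : B) : R := (bf b b) / 2.

Local Open Scope ereal_scope.

Definition edom (f : B -> \bar R) : set B := [set b | f b \is a fin_num].

Definition proper_fun (f : B -> \bar R) : Prop :=
  (forall b, f b != -oo) /\ (exists b, f b != +oo).

Definition convex_fun (f : B -> \bar R) : Prop :=
  forall (x y : B) (t : R), (0 < t < 1)%R ->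
    f (t *: x + (1 - t) *: y)%R <= t%:E * f x + (1 - t)%:E * f y.

Definition fat (bf : B -> B -> R) (f : B -> \bar R) (c : B) : \bar R :=
  ereal_sup [set (bf b c)%:E - f b | b in [set: B]].

Definition BC_fun (bf : B -> B -> R) (f : B -> \bar R) : Prop :=
  proper_fun f /\ convex_fun f /\
  (forall b, fat bf f b >= f b /\ f b >= (qf bf b)%:E).

Definition TBC_fun (bf : B -> B -> R) (g : B -> \bar R) : Prop :=
  proper_fun g /\ convex_fun g /\
  (forall b, fat bf g (- b)%R >= g b /\ g b >= (- qf bf b)%:E).

Definition Pq (bf : B -> B -> R) (f : B -> \bar R) : set B :=
  [set b | f b = (qf bf b)%:E].

Definition Nq (bf : B -> B -> R) (g : B -> \bar R) : set B :=
  [set b | g b = (- qf bf b)%:E].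

Definition diff_is_all (X Y : set B) : Prop :=
  forall b : B, exists x y, X x /\ Y y /\ b = (x - y)%R.

End SSDB.

(* Only the forward implication needs work.  Fix b and put phi := f and
   psi z := g (z - b) + q b - bf z b; the quadratic bounds on f and g make
   phi + psi >= 0, and dom phi - dom psi = B.  A Baire category argument
   followed by a Robinson-Ursescu iteration shows that every point of some
   ball is exactly x - z with phi x and psi z bounded, so the gauge
   p u := inf {(phi x + psi z) / t | t > 0, x - z = t u} is a real-valued
   sublinear functional, bounded on balls.  Hahn-Banach gives a continuous
   linear l <= p, which by the SSDB property is bf _ c.  The inequality
   bf (x - z) c <= phi x + psi z bounds f^@(c) + g^@(b - c); together with
   f <= f^@, g <= g^@(- _) and the quadratic lower bounds it forces
   f c = q c and g (c - b) = - q (c - b), and b = c - (c - b). *)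

From HB Require Import structures.
From mathcomp Require Import all_boot all_order all_algebra.
From mathcomp Require Import all_classical all_reals all_analysis.
From mathcomp Require Import ring lra.
Set Implicit Arguments. Unset Strict Implicit. Unset Printing Implicit Defensive.
Import Order.TTheory GRing.Theory Num.Theory.
Import numFieldNormedType.Exports.
Local Open Scope classical_set_scope.
Local Open Scope ring_scope.

Section Sublinear.
Variables (R : realType) (X : lmodType R).

Definition sublinear (p : X -> R) :=
  (forall x y, p (x + y) <= p x + p y) /\
  (forall t x, 0 < t -> p (t *: x) <= t * p x).

Section SublinearTheory.
Variable p : X -> R.
Hypothesis sp : sublinear p.

Lemma sublinear0 : p 0 = 0.
Proof.
have := (proj2 sp) 2^-1 0; rewrite scaler0 invr_gt0 => /(_ ltac:(done)) h1.
have := (proj2 sp) 2 0; rewrite scaler0 => /(_ ltac:(done)) h2.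
lra.
Qed.

Lemma sublinearZ t x : 0 <= t -> p (t *: x) = t * p x.
Proof.
rewrite le0r => /orP[/eqP->|t0]; first by rewrite scale0r sublinear0 mul0r.
apply/le_anti; rewrite (proj2 sp) //=.
have := (proj2 sp) t^-1 (t *: x); rewrite invr_gt0 scalerA mulVf ?gt_eqF //.
by rewrite scale1r -ler_pdivlMl // => ->.
Qed.

Lemma sublinear_ge_opp x : - p (- x) <= p x.
Proof. by have := (proj1 sp) x (- x); rewrite subrr sublinear0; lra. Qed.

Lemma sublinear_odd_linear : (forall x, p (- x) = - p x) ->
  (forall x y, p (x + y) = p x + p y) /\ (forall a x, p (a *: x) = a * p x).
Proof.
move=> pN; split=> [x y|a x].
  apply/le_anti; rewrite (proj1 sp) /=.
  by have := (proj1 sp) (- x) (- y); rewrite -opprD !pN; lra.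
have [a0|a0] := leP 0 a; first exact: sublinearZ.
have -> : a *: x = (- a) *: (- x) by rewrite scalerN scaleNr opprK.
by rewrite sublinearZ ?pN; lra.
Qed.

End SublinearTheory.

(* The infimum of [p] along the ray [x + t a] is again sublinear, lies below
   [p], and is at most [- p a] at [- a]; hence a minimal [p] is odd. *)
Definition ray_inf (p : X -> R) (a x : X) : R :=
  inf [set p (x + t *: a) - t * p a | t in [set t : R | 0 <= t]].

Section RayInf.
Variables (p : X -> R) (a : X).
Hypothesis sp : sublinear p.

Let ray_ne x : [set p (x + t *: a) - t * p a | t in [set t : R | 0 <= t]] !=set0.
Proof. by exists (p (x + 0 *: a) - 0 * p a); exists 0 => //=. Qed.

Let ray_lb x : has_lbound [set p (x + t *: a) - t * p a | t in [set t : R | 0 <= t]].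
Proof.
exists (- p (- x)) => _ [t /= t0 <-].
have := (proj1 sp) (x + t *: a) (- x); rewrite addrC addKr sublinearZ //; lra.
Qed.

Lemma ray_inf_le x t : 0 <= t -> ray_inf p a x <= p (x + t *: a) - t * p a.
Proof. by move=> t0; apply: ge_inf => //; exists t. Qed.

Lemma sublinear_ray_inf : sublinear (ray_inf p a).
Proof.
split=> [x y|c x c0].
  rewrite -lerBlDr [X in _ <= X]/ray_inf; apply: lb_le_inf => // _ [t /= t0 <-].
  suff : ray_inf p a (x + y) - (p (x + t *: a) - t * p a) <= ray_inf p a y by lra.
  rewrite [X in _ <= X]/ray_inf; apply: lb_le_inf => // _ [s /= s0 <-].
  have := ray_inf_le (x + y) (addr_ge0 t0 s0).
  have := (proj1 sp) (x + t *: a) (y + s *: a).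
  rewrite addrACA -scalerDl mulrDl; lra.
rewrite -ler_pdivrMl // [X in _ <= X]/ray_inf; apply: lb_le_inf => // _ [t /= t0 <-].
rewrite ler_pdivrMl //.
have := ray_inf_le (c *: x) (mulr_ge0 (ltW c0) t0).
have := (proj2 sp) c (x + t *: a) c0.
rewrite scalerDr scalerA mulrBr mulrA; lra.
Qed.

Lemma ray_inf_le_fun x : ray_inf p a x <= p x.
Proof. by have := ray_inf_le x (lexx 0); rewrite scale0r addr0 mul0r subr0. Qed.

Lemma ray_inf_opp : ray_inf p a (- a) <= - p a.
Proof. by have := ray_inf_le (- a) ler01; rewrite scale1r addNr sublinear0 // mul1r sub0r. Qed.

End RayInf.

Lemma minimal_sublinear_odd (p : X -> R) : sublinear p ->
  (forall r, sublinear r -> (forall x, r x <= p x) -> forall x, p x <= r x) ->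
  forall x, p (- x) = - p x.
Proof.
move=> sp pmin x; apply/le_anti/andP; split.
  apply: le_trans (pmin _ (sublinear_ray_inf x sp) (ray_inf_le_fun x sp) (- x)) _.
  exact: ray_inf_opp.
by have := sublinear_ge_opp sp x; lra.
Qed.

Definition pointwise_inf (A : set (X -> R)) (x : X) : R := inf [set s x | s in A].

Lemma pointwise_inf_chain (p : X -> R) (A : set (X -> R)) :
  A !=set0 -> (forall s, A s -> sublinear s /\ forall x, s x <= p x) ->
  total_on A (fun s1 s2 => forall x, s1 x <= s2 x) ->
  [/\ sublinear (pointwise_inf A), forall x, pointwise_inf A x <= p x
    & forall s x, A s -> pointwise_inf A x <= s x].
Proof.
move=> [s0 As0] Asub Atot.
have Ine x : [set s x | s in A] !=set0 by exists (s0 x); exists s0.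
have Ilb x : has_lbound [set s x | s in A].
  exists (- p (- x)) => _ [s As <-]; have [ss sp] := Asub s As.
  by have := sublinear_ge_opp ss x; have := sp (- x); lra.
have Ile s x : A s -> pointwise_inf A x <= s x by move=> As; apply: ge_inf => //; exists s.
split => //; last by move=> x; apply: le_trans (Ile _ _ As0) (proj2 (Asub _ As0) x).
split=> [x y|c x c0].
  rewrite -lerBlDr [X in _ <= X]/pointwise_inf; apply: lb_le_inf => // _ [s1 As1 <-].
  suff : pointwise_inf A (x + y) - s1 x <= pointwise_inf A y by lra.
  rewrite [X in _ <= X]/pointwise_inf; apply: lb_le_inf => // _ [s2 As2 <-].
  have [s1s2|s2s1] := Atot _ _ As1 As2.
  - have := Ile _ (x + y) As1; have := (proj1 (proj1 (Asub _ As1))) x y.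
    have := s1s2 y; lra.
  - have := Ile _ (x + y) As2; have := (proj1 (proj1 (Asub _ As2))) x y.
    have := s2s1 x; lra.
rewrite -ler_pdivrMl // [X in _ <= X]/pointwise_inf; apply: lb_le_inf => // _ [s As <-].
rewrite ler_pdivrMl //.
by apply: le_trans (Ile _ _ As) _; exact: (proj2 (proj1 (Asub _ As))).
Qed.

Theorem Hahn_Banach (p : X -> R) : sublinear p ->
  exists l : X -> R, [/\ forall x y, l (x + y) = l x + l y,
    forall a x, l (a *: x) = a * l x & forall x, l x <= p x].
Proof.
move=> sp.
pose T := {q : X -> R | sublinear q /\ forall x, q x <= p x}.
pose below (q1 q2 : T) := `[< forall x, sval q2 x <= sval q1 x >].
have [[q [sq qp]] qmin] : exists q : T, premaximal below q.
  apply: (ZL_preorder (exist _ p (conj sp (fun=> lexx _)))).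
  - by move=> ?; apply/asboolP.
  - move=> ? ? ? /asboolP h1 /asboolP h2; apply/asboolP => x.
    exact: le_trans (h2 x) (h1 x).
  move=> A Atot.
  have [[q0 Aq0]|A0] := pselect (A !=set0); last first.
    by exists (exist _ p (conj sp (fun=> lexx _))) => s As; exfalso; apply: A0; exists s.
  have [] := @pointwise_inf_chain p [set sval s | s in A].
  - by exists (sval q0); exists q0.
  - by move=> _ [[s ps] _ <-].
  - move=> _ _ [s1 As1 <-] [s2 As2 <-].
    by case: (Atot _ _ As1 As2) => /asboolP h; [right|left].
  move=> sm mp mle; exists (exist _ (pointwise_inf _) (conj sm mp)) => s As.
  by apply/asboolP => x /=; apply: mle; exists s.
have qodd : forall x, q (- x) = - q x.
  apply: minimal_sublinear_odd => // r sr rq.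
  have rp x : r x <= p x by exact: le_trans (rq x) (qp x).
  exact/asboolP/(qmin (exist _ r (conj sr rp)))/asboolP.
by have [qD qZ] := sublinear_odd_linear sq qodd; exists q.
Qed.

End Sublinear.

Lemma cvg_geometric_increments (R : realType) (X : completeNormedModType R)
  (u : nat -> X) (C : R) :
  (forall n, `|u n.+1 - u n| <= C * 2^-1 ^+ n) -> cvgn u.
Proof.
move=> hu.
have C0 : 0 <= C by have := hu 0%N; rewrite expr0 mulr1; apply: le_trans.
have -> : u = (fun=> u 0%N) + series (telescope u).
  by apply/funext => n; rewrite [in LHS](eq_sum_telescope u n).
apply: is_cvgD; first exact: is_cvg_cst.
apply: normed_cvg; apply: (@series_le_cvg _ _ (geometric C 2^-1)).
- by move=> n /=.
- by move=> n; rewrite /geometric /= mulr_ge0 // exprn_ge0.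
- exact: hu.
apply/cvg_ex; eexists; apply: cvg_geometric_series.
by rewrite ger0_norm // invf_lt1 // ltr1n.
Qed.

Section ConvexPair.
Variables (R : realType) (X : completeNormedModType R).

Definition convex_on (D : set X) (F : X -> R) :=
  forall x y t, D x -> D y -> 0 < t < 1 ->
    D (t *: x + (1 - t) *: y) /\ F (t *: x + (1 - t) *: y) <= t * F x + (1 - t) * F y.

Definition closed_epigraph (D : set X) (F : X -> R) :=
  forall (s : nat -> X) (M : nat -> R) x m, (forall n, D (s n) /\ F (s n) <= M n) ->
    s @ \oo --> x -> M @ \oo --> m -> D x /\ F x <= m.

Definition bounded_sublevel (D : set X) (F : X -> R) (N : R) : set X :=
  [set x | [/\ D x, `|x| <= N & F x <= N]].

Lemma bounded_sublevel_le D F N N' :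
  N <= N' -> bounded_sublevel D F N `<=` bounded_sublevel D F N'.
Proof. by move=> NN' x [Dx nx Fx]; split => //; apply: le_trans NN'. Qed.

Lemma bounded_sublevel_convex D F N x y t : convex_on D F -> 0 < t < 1 ->
  bounded_sublevel D F N x -> bounded_sublevel D F N y ->
  bounded_sublevel D F N (t *: x + (1 - t) *: y).
Proof.
move=> cvx t01 [Dx nx Fx] [Dy ny Fy]; have /andP[t0 t1] := t01.
have [Dt Ft] := cvx x y t Dx Dy t01; split => //.
  apply: le_trans (ler_normD _ _) _; rewrite !normrZ !ger0_norm; nra.
by apply: le_trans Ft _; nra.
Qed.

Lemma closed_epigraph_const D F (s : nat -> X) x M : closed_epigraph D F ->
  (forall n, D (s n) /\ F (s n) <= M) -> s @ \oo --> x -> D x /\ F x <= M.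
Proof. by move=> cl hs sx; apply: (cl s (fun=> M)) => //; exact: cvg_cst. Qed.

Definition sublevel_diff D1 F1 D2 F2 N : set X :=
  [set x - z | x in bounded_sublevel D1 F1 N & z in bounded_sublevel D2 F2 N].

Lemma lincomb_sub (a b c d : X) (t m : R) :
  (t *: a + m *: b) - (t *: c + m *: d) = t *: (a - c) + m *: (b - d).
Proof. by rewrite opprD addrACA -!scalerBr. Qed.

Lemma convex_step_sub (a b : X) (m : R) : (1 - m) *: a + m *: b - a = m *: (b - a).
Proof. by rewrite scalerBl scale1r scalerBr addrAC [a - _]addrC addrK addrC. Qed.

Lemma sub_convex_step (w a b : X) (m : R) : m != 0 ->
  w - ((1 - m) *: a + m *: b) = m *: (w + ((1 - m) / m) *: (w - a) - b).
Proof.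
move=> m0; apply/esym; rewrite scalerBr scalerDr scalerA mulrC divfK // scalerBr scalerBl scale1r.
rewrite opprD !addrA; congr (_ - _ - _).
by rewrite addrAC subrr add0r.
Qed.

Definition half_pow (n : nat) : R := 2^-1 ^+ n.+1.

Lemma half_pow_gt0 n : 0 < half_pow n.
Proof. by rewrite exprn_gt0 // invr_gt0. Qed.

Lemma half_pow_lt1 n : half_pow n < 1.
Proof. by rewrite exprn_ilt1 // ?invr_ge0 ?invf_lt1 ?ltr1n. Qed.

Lemma half_powS n : half_pow n.+1 = half_pow n / 2.
Proof. by rewrite /half_pow exprS mulrC. Qed.

Lemma cvg_half_pow : half_pow @ \oo --> 0.
Proof.
rewrite (_ : half_pow = geometric 2^-1 2^-1); last first.
  by apply/funext => n; rewrite /half_pow /geometric /= exprS.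
by apply: cvg_geometric; rewrite ger0_norm // invf_lt1 // ltr1n.
Qed.

Section ConvexSum.
Variables (D1 D2 : set X) (F1 F2 : X -> R).
Hypotheses (cvx1 : convex_on D1 F1) (cvx2 : convex_on D2 F2).
Hypotheses (cl1 : closed_epigraph D1 F1) (cl2 : closed_epigraph D2 F2).

Local Notation diff N := (sublevel_diff D1 F1 D2 F2 N).

Lemma closure_sublevel_diffP N y : closure (diff N) y -> forall e, 0 < e ->
  exists x z, [/\ bounded_sublevel D1 F1 N x, bounded_sublevel D2 F2 N z
                & `|y - (x - z)| < e].
Proof.
move=> cly e e0; have [_ [[x Bx [z Bz <-]] yxz]] := cly _ (nbhsx_ballx y _ e0).
by exists x, z; split => //; move: yxz; rewrite -ball_normE.
Qed.

Section Iteration.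
Variables (N r : R) (w : X) (c : X -> X * X).
Hypotheses (r_gt0 : 0 < r) (w_small : `|w| < r / 2).
Hypothesis c_approx : forall y, `|y| < r ->
  [/\ bounded_sublevel D1 F1 N (c y).1, bounded_sublevel D2 F2 N (c y).2
    & `|y - ((c y).1 - (c y).2)| < r / 4].

(* [aim s n] is the point whose exact representation, mixed in with weight
   [half_pow n], would represent [w] exactly. *)
Definition aim (s : X * X) n : X :=
  w + ((1 - half_pow n) / half_pow n) *: (w - (s.1 - s.2)).

Fixpoint approx_seq n : X * X :=
  if n is n'.+1 then
    let s := approx_seq n' in let m := half_pow n' in
    ((1 - m) *: s.1 + m *: (c (aim s n')).1, (1 - m) *: s.2 + m *: (c (aim s n')).2)
  else c w.

Lemma norm_aim s n : `|w - (s.1 - s.2)| < half_pow n * (r / 2) -> `|aim s n| < r.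
Proof.
move=> hE; apply: le_lt_trans (ler_normD _ _) _; rewrite normrZ.
have m0 := half_pow_gt0 n; have m1 := half_pow_lt1 n.
rewrite ger0_norm; last by apply: divr_ge0; lra.
have : (1 - half_pow n) / half_pow n * `|w - (s.1 - s.2)| <= (1 - half_pow n) * (r / 2).
  rewrite -mulrA; apply: ler_wpM2l; first lra.
  by rewrite ler_pdivrMl // ltW.
have : 0 < half_pow n * r by rewrite mulr_gt0.
have := w_small; lra.
Qed.

Lemma approx_seq_inv n :
  [/\ bounded_sublevel D1 F1 N (approx_seq n).1, bounded_sublevel D2 F2 N (approx_seq n).2
    & `|w - ((approx_seq n).1 - (approx_seq n).2)| < half_pow n * (r / 2)].
Proof.
elim: n => [|n [B1 B2 err]].
  have w_lt_r : `|w| < r by have := w_small; have := r_gt0; lra.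
  by have [] := c_approx w_lt_r; rewrite /half_pow expr1; split => //; lra.
have [C1 C2 errc] := c_approx (norm_aim err).
have m0 := half_pow_gt0 n; have m1 := half_pow_lt1 n.
have t01 : 0 < 1 - half_pow n < 1 by apply/andP; split; lra.
have e1 : 1 - (1 - half_pow n) = half_pow n by ring.
split=> /=.
- by have := bounded_sublevel_convex cvx1 t01 B1 C1; rewrite e1.
- by have := bounded_sublevel_convex cvx2 t01 B2 C2; rewrite e1.
rewrite lincomb_sub sub_convex_step ?gt_eqF // normrZ gtr0_norm // half_powS.
have : half_pow n * `|aim (approx_seq n) n - ((c (aim (approx_seq n) n)).1 -
  (c (aim (approx_seq n) n)).2)| < half_pow n * (r / 4) by rewrite ltr_pM2l.
lra.
Qed.

Lemma approx_seq_step n : `|(approx_seq n.+1).1 - (approx_seq n).1| <= N * 2^-1 ^+ n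
  /\ `|(approx_seq n.+1).2 - (approx_seq n).2| <= N * 2^-1 ^+ n.
Proof.
have [[_ n1 _] [_ n2 _] err] := approx_seq_inv n.
have [[_ n1' _] [_ n2' _] _] := c_approx (norm_aim err).
have m0 := half_pow_gt0 n.
have -> : N * 2^-1 ^+ n = half_pow n * (N + N) by rewrite /half_pow exprS; field.
rewrite /= !convex_step_sub !normrZ !gtr0_norm //.
by split; rewrite ler_pM2l //; apply: le_trans (ler_normB _ _) (lerD _ _).
Qed.

Lemma approx_seq_limit :
  exists x z, [/\ D1 x, D2 z, F1 x <= N, F2 z <= N & x - z = w].
Proof.
have /cvg_ex[/= x hx] : cvgn (fun n => (approx_seq n).1).
  by apply: (cvg_geometric_increments (C := N)) => n; case: (approx_seq_step n).
have /cvg_ex[/= z hz] : cvgn (fun n => (approx_seq n).2).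
  by apply: (cvg_geometric_increments (C := N)) => n; case: (approx_seq_step n).
have [Dx Fx] : D1 x /\ F1 x <= N.
  by apply: (closed_epigraph_const cl1 _ hx) => n; case: (approx_seq_inv n) => -[].
have [Dz Fz] : D2 z /\ F2 z <= N.
  by apply: (closed_epigraph_const cl2 _ hz) => n; case: (approx_seq_inv n) => _ [].
exists x, z; split => //.
have to_w : (fun n => (approx_seq n).1 - (approx_seq n).2) @ \oo --> w.
  apply/cvgrPdist_lt => e e0.
  have e2 : 0 < e / (r / 2) by rewrite !divr_gt0.
  move/cvgrPdist_lt: cvg_half_pow => /(_ _ e2); apply: filterS => n.
  rewrite sub0r normrN gtr0_norm ?half_pow_gt0 // ltr_pdivlMr ?divr_gt0 //.
  by case: (approx_seq_inv n) => _ _; lra.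
have to_xz : (fun n => (approx_seq n).1 - (approx_seq n).2) @ \oo --> x - z.
  exact: cvgB.
exact: (cvg_unique (@norm_hausdorff _ X) to_xz to_w).
Qed.

End Iteration.

Lemma sublevel_diff_exact N r : 0 < r -> (forall y, `|y| < r -> closure (diff N) y) ->
  forall w, `|w| < r / 2 -> exists x z, [/\ D1 x, D2 z, F1 x <= N, F2 z <= N & x - z = w].
Proof.
move=> r0 cl w w_small.
have : forall y, exists s : X * X, `|y| < r ->
    [/\ bounded_sublevel D1 F1 N s.1, bounded_sublevel D2 F2 N s.2
      & `|y - (s.1 - s.2)| < r / 4].
  move=> y; have [y_small|] := pselect (`|y| < r); last by exists (0, 0).
  have r4 : 0 < r / 4 by lra.
  have [x [z [Bx Bz yxz]]] := closure_sublevel_diffP (cl y y_small) r4.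
  by exists (x, z).
by case/choice => c hc; exact: (approx_seq_limit r0 w_small hc).
Qed.

Lemma sublevel_diff_le N N' : N <= N' -> diff N `<=` diff N'.
Proof.
move=> NN' _ [x Bx [z Bz <-]].
by exists x; [exact: bounded_sublevel_le Bx | exists z => //; exact: bounded_sublevel_le Bz].
Qed.

Lemma sublevel_diff_midpoint N a b : diff N a -> diff N b -> diff N (2^-1 *: (a + b)).
Proof.
move=> [x1 Bx1 [z1 Bz1 <-]] [x2 Bx2 [z2 Bz2 <-]].
have t01 : 0 < (2^-1 : R) < 1.
  by apply/andP; split; [rewrite invr_gt0 | rewrite invf_lt1 // ltr1n].
have h : 1 - 2^-1 = 2^-1 :> R by field.
exists (2^-1 *: x1 + (1 - 2^-1) *: x2); first exact: bounded_sublevel_convex.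
exists (2^-1 *: z1 + (1 - 2^-1) *: z2); first exact: bounded_sublevel_convex.
by rewrite lincomb_sub h -scalerDr.
Qed.

Lemma closure_sublevel_diff_midpoint N a b :
  closure (diff N) a -> diff N b -> closure (diff N) (2^-1 *: (a + b)).
Proof.
move=> cla Db B /nbhs_ballP[e e0 sB].
have e2 : 0 < 2 * e by rewrite mulr_gt0.
have [x [z [Bx Bz axz]]] := closure_sublevel_diffP cla e2.
exists (2^-1 *: (x - z + b)); split.
  by apply: sublevel_diff_midpoint => //; exists x => //; exists z.
apply: sB; rewrite -ball_normE /ball_ /= -scalerBr opprD addrACA subrr addr0.
by rewrite normrZ ger0_norm ?invr_ge0 // mulrC ltr_pdivrMr //; lra.
Qed.

Lemma sublevel_diff_cover : diff_is_all D1 D2 -> forall u, exists n : nat, diff n%:R u.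
Proof.
move=> cover u; have [x [z [Dx [Dz ->]]]] := cover u.
have [n ub] : exists n : nat, `|x| + `|z| + `|F1 x| + `|F2 z| <= n%:R.
  by exists (Num.truncn (`|x| + `|z| + `|F1 x| + `|F2 z|)).+1; exact/ltW/truncnS_gt.
have := normr_ge0 x; have := normr_ge0 z; have := normr_ge0 (F1 x).
have := normr_ge0 (F2 z); have := ler_norm (F1 x); have := ler_norm (F2 z) => *.
by exists n, x; [split=> //; lra | exists z => //; split=> //; lra].
Qed.

Lemma sublevel_diff_closure_interior : diff_is_all D1 D2 ->
  exists (n : nat) x0 r, 0 < r /\ ball x0 r `<=` closure (diff n%:R).
Proof.
move=> cover.
have [n ndense] : exists n : nat, ~ dense (~` closure (diff n%:R)).
  apply/existsNP => alld.
  have : dense (\bigcap_n ~` closure (diff n%:R)).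
    by apply: Baire => n; split; [exact/closed_openC/closed_closure | exact: alld].
  move=> /(_ setT ltac:(by exists 0) openT) [u [_ hu]].
  have [k Dk] := sublevel_diff_cover cover u.
  exact: (hu k Logic.I) (subset_closure Dk).
have [U [[x0 Ux0] UD]] := denseNE ndense.
have [r r0 Ur] : nbhs_ball x0 U by apply/nbhs_ballP/open_nbhs_nbhs.
exists n, x0, r; split => // y /Ur Uy; apply: contrapT => ncl.
have : (U `&` ~` closure (diff n%:R)) y by [].
by rewrite UD.
Qed.

Lemma sublevel_diff_dense_ball : diff_is_all D1 D2 ->
  exists N r, 0 < r /\ forall y, `|y| < r -> closure (diff N) y.
Proof.
move=> cover.
have [n [x0 [r [r0 sub]]]] := sublevel_diff_closure_interior cover.
have [m Dm] := sublevel_diff_cover cover (- x0).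
pose N := (maxn n m)%:R : R.
have nN : n%:R <= N by rewrite ler_nat leq_maxl.
have mN : m%:R <= N by rewrite ler_nat leq_maxr.
exists N, (r / 2); split => [|y y_small]; first by rewrite divr_gt0.
have -> : y = 2^-1 *: ((2 *: y + x0) + - x0).
  by rewrite addrK scalerA mulVf ?pnatr_eq0 // scale1r.
apply: closure_sublevel_diff_midpoint.
  apply: closureS (sublevel_diff_le nN) _ _.
  apply: sub; rewrite -ball_normE /ball_ /= opprD addrCA subrr addr0 normrN.
  by rewrite normrZ ger0_norm //; lra.
exact: sublevel_diff_le mN _ Dm.
Qed.

Lemma sublevel_diff_exact_ball : diff_is_all D1 D2 ->
  exists N rho, 0 < rho /\ forall w, `|w| < rho ->
    exists x z, [/\ D1 x, D2 z, F1 x <= N, F2 z <= N & x - z = w].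
Proof.
move=> /sublevel_diff_dense_ball[N [r [r0 dense_ball]]].
exists N, (r / 2); split; first by rewrite divr_gt0.
exact: sublevel_diff_exact.
Qed.

End ConvexSum.
End ConvexPair.

Section Separation.
Variables (R : realType) (X : completeNormedModType R).
Variables (D1 D2 : set X) (F1 F2 : X -> R) (m : R).
Hypotheses (cvx1 : convex_on D1 F1) (cvx2 : convex_on D2 F2).
Hypothesis sum_ge : forall z, D1 z -> D2 z -> m <= F1 z + F2 z.

Definition excess_quotients (u : X) : set R :=
  [set e | exists t x z, [/\ 0 < t, D1 x, D2 z, x - z = t *: u
                           & e = (F1 x + F2 z - m) / t]].

Definition excess_gauge (u : X) : R := inf (excess_quotients u).

(* Mixing representations of [t u] and [- s u] with weights [s] and [t] yields
   a common point of [D1] and [D2], where the sum is at least [m]. *)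
Lemma excess_cross t s x z x' z' u : 0 < t -> 0 < s ->
  D1 x -> D2 z -> D1 x' -> D2 z' -> x - z = t *: u -> x' - z' = - s *: u ->
  m * (t + s) <= s * (F1 x + F2 z) + t * (F1 x' + F2 z').
Proof.
move=> t0 s0 Dx Dz Dx' Dz' exz exz'.
have ts : 0 < t + s by rewrite addr_gt0.
pose lam := s / (t + s).
have lam01 : 0 < lam < 1.
  by apply/andP; split; [rewrite divr_gt0 | rewrite ltr_pdivrMr // mul1r ltr_pwDl].
have e1 : lam * (t + s) = s by rewrite /lam divfK // gt_eqF.
have e2 : (1 - lam) * (t + s) = t by rewrite mulrBl e1 mul1r addrK.
have [DX FX] := cvx1 Dx Dx' lam01.
have [DZ FZ] := cvx2 Dz Dz' lam01.
have eXZ : lam *: x + (1 - lam) *: x' = lam *: z + (1 - lam) *: z'.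
  apply/eqP; rewrite -subr_eq0 lincomb_sub exz exz' !scalerA -scalerDl.
  suff -> : lam * t + (1 - lam) * - s = 0 by rewrite scale0r.
  by rewrite /lam; field; rewrite gt_eqF.
have DZ' : D2 (lam *: x + (1 - lam) *: x') by rewrite eXZ.
have := sum_ge DX DZ'; rewrite [in F2 _]eXZ => hm.
have hA : m <= lam * (F1 x + F2 z) + (1 - lam) * (F1 x' + F2 z') by lra.
have hB := ler_wpM2r (ltW ts) hA.
have E : (lam * (F1 x + F2 z) + (1 - lam) * (F1 x' + F2 z')) * (t + s) =
  lam * (t + s) * (F1 x + F2 z) + (1 - lam) * (t + s) * (F1 x' + F2 z') by ring.
by rewrite E e1 e2 in hB.
Qed.

Lemma excess_quotients_scale u c e : 0 < c ->
  excess_quotients u e -> excess_quotients (c *: u) (c * e).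
Proof.
move=> c0 [t [x [z [t0 Dx Dz exz ->]]]].
exists (t / c), x, z; split => //; first by rewrite divr_gt0.
  by rewrite scalerA divfK ?gt_eqF.
by field; rewrite !gt_eqF.
Qed.

Lemma excess_quotients_add u w e1 e2 :
  excess_quotients u e1 -> excess_quotients w e2 ->
  exists2 e, excess_quotients (u + w) e & e <= e1 + e2.
Proof.
move=> [t1 [x1 [z1 [t10 Dx1 Dz1 exz1 ->]]]] [t2 [x2 [z2 [t20 Dx2 Dz2 exz2 ->]]]].
have t12 : 0 < t1 + t2 by rewrite addr_gt0.
pose lam := t2 / (t1 + t2); pose T := t1 * t2 / (t1 + t2).
have lam01 : 0 < lam < 1.
  by apply/andP; split; [rewrite divr_gt0 | rewrite ltr_pdivrMr // mul1r ltr_pwDl].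
have T0 : 0 < T by rewrite !divr_gt0 // mulr_gt0.
have [DX FX] := cvx1 Dx1 Dx2 lam01.
have [DZ FZ] := cvx2 Dz1 Dz2 lam01.
eexists; first exists T, (lam *: x1 + (1 - lam) *: x2), (lam *: z1 + (1 - lam) *: z2).
  split => //; rewrite lincomb_sub exz1 exz2 !scalerA scalerDr.
  by congr (_ *: _ + _ *: _); rewrite /lam /T; field; rewrite gt_eqF.
have -> : (F1 x1 + F2 z1 - m) / t1 + (F1 x2 + F2 z2 - m) / t2 =
    (lam * (F1 x1 + F2 z1 - m) + (1 - lam) * (F1 x2 + F2 z2 - m)) / T.
  by rewrite /lam /T; field; rewrite !gt_eqF.
by rewrite ler_pM2r ?invr_gt0 //; lra.
Qed.

Lemma excess_quotients_diff x z : D1 x -> D2 z ->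
  excess_quotients (x - z) (F1 x + F2 z - m).
Proof. by move=> Dx Dz; exists 1, x, z; split; rewrite ?scale1r ?divr1. Qed.

Section Gauge.
Variables (N rho : R).
Hypothesis rho_gt0 : 0 < rho.
Hypothesis rep : forall w, `|w| < rho ->
  exists x z, [/\ D1 x, D2 z, F1 x <= N, F2 z <= N & x - z = w].

Let sig (u : X) : R := rho / (2 * (`|u| + 1)).

Let sig_gt0 u : 0 < sig u.
Proof. by rewrite divr_gt0 // mulr_gt0 // ltr_pwDr. Qed.

Let norm_sig u : `|sig u *: u| < rho.
Proof.
rewrite normrZ gtr0_norm // /sig mulrAC ltr_pdivrMr; last by rewrite mulr_gt0 ?ltr_pwDr.
have := normr_ge0 u; have := rho_gt0; nra.
Qed.

Let K := 2 * N - m.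

Let excess_quotient_small u : exists2 e, excess_quotients u e & e <= K / sig u.
Proof.
have [x [z [Dx Dz Fx Fz exz]]] := rep (norm_sig u).
exists ((F1 x + F2 z - m) / sig u); first by exists (sig u), x, z.
by rewrite ler_pM2r ?invr_gt0 // /K; lra.
Qed.

Let excess_quotients_ge u e : excess_quotients u e -> - K / sig u <= e.
Proof.
move=> [t [x [z [t0 Dx Dz exz ->]]]].
have := norm_sig u; rewrite -normrN -scaleNr => /rep[x' [z' [Dx' Dz' Fx' Fz' exz']]].
have cross := excess_cross t0 (sig_gt0 u) Dx Dz Dx' Dz' exz exz'.
have ts := mulr_gt0 t0 (sig_gt0 u).
rewrite -subr_ge0 (_ : _ - _ = (sig u * (F1 x + F2 z - m) + t * K) / (t * sig u)).
  apply: divr_ge0 (ltW ts).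
  have := ler_wpM2l (ltW t0) (lerD Fx' Fz'); rewrite /K; lra.
by field; rewrite !gt_eqF.
Qed.

Let excess_ne u : excess_quotients u !=set0.
Proof. by have [e Se _] := excess_quotient_small u; exists e. Qed.

Let excess_lb u : has_lbound (excess_quotients u).
Proof. by exists (- K / sig u) => e; exact: excess_quotients_ge. Qed.

Lemma excess_gauge_le u e : excess_quotients u e -> excess_gauge u <= e.
Proof. by move=> Se; apply: ge_inf. Qed.

Lemma le_excess_gauge u a :
  (forall e, excess_quotients u e -> a <= e) -> a <= excess_gauge u.
Proof. exact: lb_le_inf. Qed.

Lemma sublinear_excess_gauge : sublinear excess_gauge.
Proof.
split=> [u w|c u c0].
  rewrite -lerBlDr; apply: le_excess_gauge => e1 S1.
  suff : excess_gauge (u + w) - e1 <= excess_gauge w by lra.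
  apply: le_excess_gauge => e2 S2.
  have [e Se ee] := excess_quotients_add S1 S2.
  by have := excess_gauge_le Se; lra.
rewrite -ler_pdivrMl //; apply: le_excess_gauge => e Se.
rewrite ler_pdivrMl //; exact/excess_gauge_le/excess_quotients_scale.
Qed.

Lemma excess_gauge_bounded r1 u : `|u| <= r1 ->
  excess_gauge u <= `|2 * N - m| * (2 * (r1 + 1)) / rho.
Proof.
move=> ur; have [e Se eK] := excess_quotient_small u.
apply: le_trans (excess_gauge_le Se) (le_trans eK _).
rewrite /sig invf_div mulrA ler_pM2r ?invr_gt0 // /K.
have a0 : 0 <= 2 * (`|u| + 1) by rewrite mulr_ge0 // addr_ge0.
apply: le_trans (ler_wpM2r a0 (ler_norm _)) _.
by apply: ler_wpM2l => //; rewrite ler_pM2l // lerD2r.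
Qed.

End Gauge.

Hypotheses (cl1 : closed_epigraph D1 F1) (cl2 : closed_epigraph D2 F2).

Theorem convex_sum_linear_minorant : diff_is_all D1 D2 ->
  exists2 l : {linear X -> R^o}, continuous l &
    forall x z, D1 x -> D2 z -> m + l (x - z) <= F1 x + F2 z.
Proof.
move=> cover.
have [N [rho [rho0 rep]]] := sublevel_diff_exact_ball cvx1 cvx2 cl1 cl2 cover.
have [l [lD lZ l_le]] := Hahn_Banach (sublinear_excess_gauge rho0 rep).
have llin : linear (l : X -> R^o) by move=> a u v; rewrite lD lZ.
pose L : {linear X -> R^o} := HB.pack (l : X -> R^o) (GRing.isLinear.Build _ _ _ _ _ llin).
exists L => [|x z Dx Dz]; last first.
  have := l_le (x - z); have := excess_gauge_le rho0 rep (excess_quotients_diff Dx Dz).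
  rewrite /=; lra.
apply/linear_continuous/(bounded_landau L).1 => r1.
exists (`|2 * N - m| * (2 * (r1 + 1)) / rho) => u ur.
suff : `|l u| <= `|2 * N - m| * (2 * (r1 + 1)) / rho by [].
have lN : l (- u) = - l u by rewrite -scaleN1r lZ mulN1r.
have nu : `|- u| <= r1 by rewrite normrN.
have h1 := le_trans (l_le u) (excess_gauge_bounded rho0 rep ur).
have h2 := le_trans (l_le (- u)) (excess_gauge_bounded rho0 rep nu).
rewrite lN in h2; rewrite ler_norml; apply/andP; split; lra.
Qed.

End Separation.

Section Bilinear.
Variables (R : realType) (B : completeNormedModType R) (bf : B -> B -> R).
Hypothesis sb : sym_bilinear bf.

Lemma bf0l c : bf 0 c = 0.
Proof. by have := (proj2 sb) 1 0 0 c; rewrite scaler0 addr0 mul1r; lra. Qed.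

Lemma bfZl a x c : bf (a *: x) c = a * bf x c.
Proof. by have := (proj2 sb) a x 0 c; rewrite addr0 bf0l addr0. Qed.

Lemma bfDl x y c : bf (x + y) c = bf x c + bf y c.
Proof. by have := (proj2 sb) 1 x y c; rewrite scale1r mul1r. Qed.

Lemma bfBl x y c : bf (x - y) c = bf x c - bf y c.
Proof. by rewrite bfDl -scaleN1r bfZl mulN1r. Qed.

Lemma bfBr x y c : bf c (x - y) = bf c x - bf c y.
Proof. by rewrite !((proj1 sb) c) bfBl. Qed.

Lemma qfB x y : qf bf (x - y) = qf bf x - bf x y + qf bf y.
Proof. by rewrite /qf bfBl !bfBr ((proj1 sb) y x); field. Qed.

End Bilinear.

Section SSDBContinuity.
Variables (R : realType) (B : completeNormedModType R) (bf : B -> B -> R).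
Hypothesis ssdb : SSDB bf.

Lemma SSDB_bf_bound u c : `|bf u c| <= `|u| * `|c|.
Proof.
have [_ [sb [hn _]]] := ssdb.
have [->|u0] := eqVneq u 0; first by rewrite bf0l // !normr0 mul0r.
have nu : 0 < `|u| by rewrite normr_gt0.
have := (proj1 (hn c)) (`|u|^-1 *: u).
rewrite normrZ ger0_norm ?invr_ge0 // mulVf ?gt_eqF // => /(_ (lexx _)).
by rewrite bfZl // normrM ger0_norm ?invr_ge0 // -ler_pdivrMl.
Qed.

Lemma SSDB_bf_continuousl c : continuous (fun x => bf x c).
Proof.
have sb := proj1 (proj2 ssdb).
have lin : linear (fun x => bf x c : R^o) by move=> a u v; rewrite bfDl // bfZl.
pose L : {linear B -> R^o} := HB.pack (fun x => bf x c : R^o) (GRing.isLinear.Build _ _ _ _ _ lin).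
apply/(@linear_continuous _ _ _ L)/(bounded_landau L).1 => r.
exists (r * `|c|) => x xr.
by apply: le_trans (SSDB_bf_bound x c) _; exact: ler_wpM2r.
Qed.

End SSDBContinuity.

Section Perturbation.
Variables (R : realType) (X : completeNormedModType R).
Variables (D : set X) (F h : X -> R) (b : X).

Lemma convex_on_shift : convex_on D F ->
  (forall x y t, h (t *: x + (1 - t) *: y) = t * h x + (1 - t) * h y) ->
  convex_on [set y | D (y - b)] (fun y => F (y - b) + h y).
Proof.
move=> cvx h_affine x y t Dx Dy t01 /=.
have -> : t *: x + (1 - t) *: y - b = t *: (x - b) + (1 - t) *: (y - b).
  by rewrite !scalerBr addrACA -opprD -scalerDl (addrC t) subrK scale1r.
have [Dt Ft] := cvx _ _ _ Dx Dy t01; split => //=.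
by rewrite h_affine; lra.
Qed.

Lemma closed_epigraph_shift : closed_epigraph D F -> continuous h ->
  closed_epigraph [set y | D (y - b)] (fun y => F (y - b) + h y).
Proof.
move=> cl hc s M x m sM sx Mm.
have sb : (fun n => s n - b) @ \oo --> x - b by apply: cvgB => //; exact: cvg_cst.
have Mh : (fun n => M n - h (s n)) @ \oo --> m - h x.
  by apply: cvgB => //; exact: (continuous_cvg _ (hc x) sx).
have sMh n : D (s n - b) /\ F (s n - b) <= M n - h (s n).
  by have [Dn Fn] := sM n; split; [exact: Dn | move: Fn => /=; lra].
have [Dx Fx] := cl _ _ _ _ sMh sb Mh.
by split => //=; lra.
Qed.

End Perturbation.

Section ExtendedFunctions.
Variables (R : realType) (X : completeNormedModType R) (h : X -> \bar R).
Local Open Scope ereal_scope.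

Lemma fin_num_le (e : \bar R) (a : R) : e != -oo -> e <= a%:E ->
  e \is a fin_num /\ (fine e <= a)%R.
Proof. by case: e => [r| |] //= _; rewrite lee_fin. Qed.

Lemma lsc_le_cvg (s : nat -> X) (M : nat -> R) x m :
  lower_semicontinuous h -> s @ \oo --> x -> M @ \oo --> m ->
  (forall n, h (s n) <= (M n)%:E) -> h x <= m%:E.
Proof.
move=> lsc sx Mm sM; rewrite leNgt; apply/negP => mhx.
have [a ma ahx] : exists2 a : R, (m < a)%R & a%:E < h x.
  move: mhx; case: (h x) => [r| |] //=.
  - by rewrite lte_fin => mr; exists ((m + r) / 2)%R; rewrite ?lte_fin; lra.
  - by move=> _; exists (m + 1)%R; rewrite ?ltry //; lra.
have [V xV Vh] := lsc x a ahx.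
have sV : \forall n \near \oo, V (s n) by exact: sx.
have [n [Vsn Mna]] := filter_ex (filterI sV (cvgr_lt m Mm a ma)).
have := Vh _ Vsn; rewrite ltNge; move/negP; apply.
by apply: le_trans (sM n) _; rewrite lee_fin ltW.
Qed.

Hypothesis h_gtNy : forall x, h x != -oo.

Lemma convex_fun_convex_on : convex_fun h -> convex_on (edom h) (fun x => fine (h x)).
Proof.
move=> cvx x y t Dx Dy t01.
have := cvx x y t t01; rewrite -(fineK Dx) -(fineK Dy) -!EFinM -EFinD.
exact: fin_num_le.
Qed.

Lemma lsc_closed_epigraph : lower_semicontinuous h ->
  closed_epigraph (edom h) (fun x => fine (h x)).
Proof.
move=> lsc s M x m sM sx Mm; apply: fin_num_le => //.
apply: lsc_le_cvg lsc sx Mm _ => n.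
by have [Dn Fn] := sM n; rewrite -(fineK Dn) lee_fin.
Qed.

End ExtendedFunctions.

Lemma diff_is_allS (R : realType) (B : completeNormedModType R) (X1 X2 Y1 Y2 : set B) :
  X1 `<=` X2 -> Y1 `<=` Y2 -> diff_is_all X1 Y1 -> diff_is_all X2 Y2.
Proof.
move=> X12 Y12 cover b; have [x [y [Xx [Yy ->]]]] := cover b.
by exists x, y; split; [exact: X12 | split => //; exact: Y12].
Qed.

Section BCTBC.
Variables (R : realType) (B : completeNormedModType R) (bf : B -> B -> R).
Hypothesis sb : sym_bilinear bf.

Lemma fat_le (h : B -> \bar R) c (k : R) : (forall x, h x != -oo)%E ->
  (forall x, h x \is a fin_num -> bf x c - fine (h x) <= k) -> (fat bf h c <= k%:E)%E.
Proof.
move=> hNy hk; apply: ge_ereal_sup => _ [x _ <-].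
have [Dx|nDx] := boolP (h x \is a fin_num); first by rewrite -(fineK Dx) -EFinB lee_fin hk.
by move: (hNy x) nDx; case: (h x) => // _ _; rewrite /= leNye.
Qed.

(* The correction [q b - bf y b] equals [q (y - b) - q y], so the quadratic
   bounds make [fine (f y) + tbc_shift g b y] nonnegative. *)
Definition tbc_shift (g : B -> \bar R) (b y : B) : R :=
  fine (g (y - b)) + (qf bf b - bf y b).

Lemma tbc_shift_convex g b : (forall y, g y != -oo)%E -> convex_fun g ->
  convex_on [set y | edom g (y - b)] (tbc_shift g b).
Proof.
move=> gNy gcvx.
apply: (convex_on_shift (F := fun x => fine (g x)) (h := fun y => qf bf b - bf y b)).
  exact: convex_fun_convex_on.
by move=> x y t /=; rewrite (bfDl sb) !(bfZl sb); ring.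
Qed.

Lemma tbc_shift_closed g b : SSDB bf -> (forall y, g y != -oo)%E -> lower_semicontinuous g ->
  closed_epigraph [set y | edom g (y - b)] (tbc_shift g b).
Proof.
move=> ssdb gNy glsc.
apply: (closed_epigraph_shift (F := fun x => fine (g x)) (h := fun y => qf bf b - bf y b)).
  exact: lsc_closed_epigraph.
move=> x; apply: cvgB; first exact: cvg_cst.
exact: SSDB_bf_continuousl.
Qed.

Variables (f g : B -> \bar R).
Hypotheses (fBC : BC_fun bf f) (gTBC : TBC_fun bf g).

Lemma BC_TBC_shift_ge0 b z : edom f z -> edom g (z - b) ->
  0 <= fine (f z) + tbc_shift g b z.
Proof.
move=> Dz Dzb.
have := proj2 (proj2 (proj2 fBC) z); rewrite -(fineK Dz) lee_fin.
have := proj2 (proj2 (proj2 gTBC) (z - b)); rewrite -(fineK Dzb) lee_fin.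
by rewrite /tbc_shift (qfB sb) /qf; lra.
Qed.

(* The minorant bounds [f^@(c) + g^@(b - c)] by [bf b c - q b], which is also
   the sum of the quadratic lower bounds of [f c] and [g (c - b)]. *)
Lemma BC_TBC_contact b c :
  (forall x z, edom f x -> edom g (z - b) ->
     bf (x - z) c <= fine (f x) + tbc_shift g b z) ->
  Pq bf f c /\ Nq bf g (c - b).
Proof.
move: fBC gTBC => [[fNy _] [_ fb]] [[gNy _] [_ gb]] minor.
pose K := bf b c - qf bf b.
have key x y : edom f x -> edom g y ->
    bf x c - fine (f x) + (bf y (b - c) - fine (g y)) <= K.
  move=> Dx Dy; have := minor x (y + b) Dx; rewrite /= addrK => /(_ Dy).
  rewrite /tbc_shift addrK /K /qf opprD addrA !(bfBl sb) !(bfDl sb) (bfBr sb); lra.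
have gcb := proj1 (gb (c - b)); rewrite opprB in gcb.
have fc : (f c <= (K + qf bf (c - b))%R%:E)%E.
  apply: le_trans (proj1 (fb c)) (fat_le _ _) => // x Dx.
  have : (g (c - b)%R <= (K - (bf x c - fine (f x)))%R%:E)%E.
    apply: le_trans gcb (fat_le _ _) => // y Dy; have := key x y Dx Dy; lra.
  by move/(le_trans (proj2 (gb _))); rewrite lee_fin; lra.
have gc : (g (c - b)%R <= (K - qf bf c)%R%:E)%E.
  apply: le_trans gcb (fat_le _ _) => // y Dy.
  have : (f c <= (K - (bf y (b - c) - fine (g y)))%R%:E)%E.
    apply: le_trans (proj1 (fb c)) (fat_le _ _) => // x Dx; have := key x y Dx Dy; lra.
  by move/(le_trans (proj2 (fb _))); rewrite lee_fin; lra.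
have qcb : qf bf (c - b) = qf bf c - bf b c + qf bf b by rewrite (qfB sb) ((proj1 sb) c b).
split; apply/le_anti.
  by rewrite (proj2 (fb c)) andbT; apply: le_trans fc _; rewrite lee_fin /K qcb; lra.
by rewrite (proj2 (gb _)) andbT; apply: le_trans gc _; rewrite lee_fin /K qcb; lra.
Qed.

End BCTBC.

Theorem theorem4p6 (R : realType) (B : completeNormedModType R)
  (bf : B -> B -> R) (f g : B -> \bar R) :
  SSDB bf ->
  proper_fun f -> convex_fun f -> lower_semicontinuous f -> BC_fun bf f ->
  proper_fun g -> convex_fun g -> lower_semicontinuous g -> TBC_fun bf g ->
  (diff_is_all (edom f) (edom g) <-> diff_is_all (Pq bf f) (Nq bf g)).
Proof.
move=> ssdb [fNy _] fcvx flsc fBC [gNy _] gcvx glsc gTBC.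
have sb := proj1 (proj2 ssdb).
split; last by apply: diff_is_allS => x; rewrite /edom /Pq /Nq /= => ->.
move=> cover b.
have shifted_cover : diff_is_all (edom f) [set y | edom g (y - b)].
  move=> u; have [x [y [Dx [Dy e]]]] := cover (u + b).
  exists x, (y + b); split => //; split; first by rewrite /= addrK.
  by rewrite opprD addrA -e addrK.
have [L Lcont minor] := convex_sum_linear_minorant
  (convex_fun_convex_on fNy fcvx) (tbc_shift_convex sb (b := b) gNy gcvx)
  (BC_TBC_shift_ge0 sb fBC gTBC (b := b)) (lsc_closed_epigraph fNy flsc)
  (tbc_shift_closed (b := b) ssdb gNy glsc) shifted_cover.
have [c Lc] := proj2 (proj2 (proj2 ssdb)) L Lcont.
have [Pc Nc] : Pq bf f c /\ Nq bf g (c - b).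
  apply: (BC_TBC_contact sb fBC gTBC) => x z Dx Dz.
  by have := minor x z Dx Dz; rewrite add0r Lc.
by exists c, (c - b); do 2!split => //; rewrite opprB addrCA subrr addr0.
Qed.
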